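(* Let $\pi\in\mathcal P(\mathbb R^d)$ satisfy the MALA assumption with constants $\mathsf M,\mathsf L,\mathsf m$, and set $\kappa=\mathsf M/\mathsf m$. Let $\mathsf Q$ be the (subgradient) MALA proposal kernel with step size $h$, where $$0<h\le\frac{1}{200}\min\Big\{\frac{1}{d\kappa\mathsf M},\ \frac{1}{d\mathsf L^2}\Big\}.$$ Then $$\inf_{x\in\mathbb R^d}\ \mathbb E_{y\sim\mathsf Q(x,\cdot)}[\alpha(x,y)]\ >\ \frac{13}{20}.$$
   Context: MALA assumption: $\pi$ has a positive density with $\log\pi=f+g$, where $f$ is concave and differentiable with $\|\nabla f(x)-\nabla f(y)\|\le\mathsf M\|x-y\|$, $g$ satisfies $|g(x)-g(y)|\le\mathsf L\|x-y\|$, and $\pi$ is $\mathsf m$-strongly log-concave, i.e. $\log\pi(\lambda x+(1-\lambda)y)\ge\lambda\log\pi(x)+(1-\lambda)\log\pi(y)+\frac{\mathsf m}{2}\lambda(1-\lambda)\|x-y\|^2$ for all $x,y$, $\lambda\in(0,1)$. Superdifferential: $\partial\log\pi(x)=\{v\in\mathbb R^d:\ \log\pi(y)\le\log\pi(x)+v\cdot(y-x)\ \forall y\}$ (nonempty by concavity). Fix any selection $v(x)\in\partial\log\pi(x)$; then $v(x)=\nabla f(x)+v_s(x)$ with $\|v_s(x)\|\le\mathsf L$. The subgradient MALA proposal with step size $h>0$ is $\mathsf Q(x,\cdot)=\mathcal N(x+hv(x),2hI)$, i.e. $x'=x+hv(x)+\sqrt{2h}\,\xi$, $\xi\sim\mathcal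 N(0,I)$. The acceptance probability is $\alpha(x,x')=\min\{1,\frac{\pi(x')\mathsf Q(x',x)}{\pi(x)\mathsf Q(x,x')}\}$. *)

From HB Require Import structures.
From mathcomp Require Import all_boot all_order all_algebra.
From mathcomp Require Import all_classical all_reals all_analysis.
Set Implicit Arguments. Unset Strict Implicit. Unset Printing Implicit Defensive.
Import Order.TTheory GRing.Theory Num.Theory.
Import numFieldNormedType.Exports.
Local Open Scope classical_set_scope.
Local Open Scope ring_scope.

Definition dotv {R : realType} {d : nat} (u v : 'rV[R]_d) : R :=
  \sum_(i < d) u ord0 i * v ord0 i.
Definition enorm {R : realType} {d : nat} (u : 'rV[R]_d) : R :=
  Num.sqrt (dotv u u).

Definition concave_fun {R : realType} {d : nat} (f : 'rV[R]_d -> R) : Prop :=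
  forall (x y : 'rV[R]_d) (l : R), 0 < l < 1 ->
    l * f x + (1 - l) * f y <= f (l *: x + (1 - l) *: y).

Definition is_gradient {R : realType} {d : nat}
  (f : 'rV[R]_d -> R) (G : 'rV[R]_d -> 'rV[R]_d) : Prop :=
  forall x : 'rV[R]_d, differentiable f x /\ forall u, 'd f x u = dotv (G x) u.

Definition strongly_concave {R : realType} {d : nat} (m : R)
  (U : 'rV[R]_d -> R) : Prop :=
  forall (x y : 'rV[R]_d) (l : R), 0 < l < 1 ->
    l * U x + (1 - l) * U y + m / 2 * l * (1 - l) * (enorm (x - y)) ^+ 2
    <= U (l *: x + (1 - l) *: y).

Definition superdiff {R : realType} {d : nat} (U : 'rV[R]_d -> R)
  (x v : 'rV[R]_d) : Prop :=
  forall y, U y <= U x + dotv v (y - x).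

Definition MALA_assumption {R : realType} {d : nat} (M L m : R)
  (pi_ : 'rV[R]_d -> R) : Prop :=
  (forall x, 0 < pi_ x) /\
  exists (f g : 'rV[R]_d -> R) (gradf : 'rV[R]_d -> 'rV[R]_d),
    (forall x, ln (pi_ x) = f x + g x) /\
    concave_fun f /\ is_gradient f gradf /\
    (forall x y, enorm (gradf x - gradf y) <= M * enorm (x - y)) /\
    (forall x y, `|g x - g y| <= L * enorm (x - y)) /\
    0 < m /\ strongly_concave m (fun x => ln (pi_ x)).

(* Density of the proposal Q(x, .) = N(x + h v(x), 2h I) at x'. *)
Definition mala_Q {R : realType} {d : nat} (h : R) (v : 'rV[R]_d -> 'rV[R]_d)
  (x x' : 'rV[R]_d) : R :=
  (Num.sqrt (4 * pi * h)) ^- d *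
  expR (- (enorm (x' - x - h *: v x)) ^+ 2 / (4 * h)).

Definition mala_alpha {R : realType} {d : nat} (pi_ : 'rV[R]_d -> R) (h : R)
  (v : 'rV[R]_d -> 'rV[R]_d) (x x' : 'rV[R]_d) : R :=
  Order.min 1 ((pi_ x' * mala_Q h v x' x) / (pi_ x * mala_Q h v x x')).

(* xi_1, ..., xi_d are mutually independent real random variables on P,
   each with law N(0,1); i.e. the random vector xi has law N(0, I_d). *)
Definition std_gaussian_vector {R : realType} {dO : measure_display}
  {O : measurableType dO} (P : probability O R) (d : nat)
  (xi : 'I_d -> O -> R) : Prop :=
  (forall i, measurable_fun setT (xi i)) /\
  (forall i (A : set R), measurable A ->
     P (xi i @^-1` A) = normal_prob 0 1 A) /\
  (forall B : 'I_d -> set R, (forall i, measurable (B i)) ->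
     P (\bigcap_(i in [set: 'I_d]) (xi i @^-1` B i)) =
     (\prod_(i < d) P (xi i @^-1` B i))%E).

From HB Require Import structures.
From mathcomp Require Import all_boot all_order all_algebra.
From mathcomp Require Import all_classical all_reals all_analysis.
From mathcomp Require Import ring lra.
From mathcomp Require Import measurable_realfun.
Import Order.TTheory GRing.Theory Num.Theory.
Import numFieldNormedType.Exports.
Local Open Scope classical_set_scope.
Local Open Scope ring_scope.
Set Implicit Arguments. Unset Strict Implicit. Unset Printing Implicit Defensive.

(* Along a proposal step [y = x + h v(x) + sqrt(2h) xi], strong concavity of
   [log pi] together with the superdifferential inequality at [y] gives
   [log pi(y) - log pi(x) >= <v(y), y - x> + m/4 |y - x|^2], which absorbs the
   drift part of the Gaussian proposal ratio.  What remains only involves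
   [v(y) - v(x)], of norm at most [M |y - x| + 2L], and AM-GM bounds the log
   acceptance ratio below by [-beta |xi|^2 - 11/100] with
   [beta = 2hM^2/m + 5hL^2].  Hence [alpha >= 89/100 - beta |xi|^2]; since
   [E xi_i^2 <= 16/3] and the step-size condition gives [beta d <= 7/200],
   [E alpha >= 89/100 - (7/200)(16/3) > 7/10] uniformly in [x]. *)

Section Euclidean.
Variables (R : realType) (d : nat).
Implicit Types (u w z : 'rV[R]_d).

Lemma dotvC u w : dotv u w = dotv w u.
Proof. by apply: eq_bigr => i _; rewrite mulrC. Qed.

Lemma dotvDl u w z : dotv (u + w) z = dotv u z + dotv w z.
Proof. by rewrite /dotv -big_split; apply: eq_bigr => i _; rewrite mxE mulrDl. Qed.

Lemma dotvDr u w z : dotv z (u + w) = dotv z u + dotv z w.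
Proof. by rewrite dotvC dotvDl !(dotvC z). Qed.

Lemma dotvZl a u w : dotv (a *: u) w = a * dotv u w.
Proof. by rewrite /dotv mulr_sumr; apply: eq_bigr => i _; rewrite mxE mulrA. Qed.

Lemma dotvZr a u w : dotv w (a *: u) = a * dotv w u.
Proof. by rewrite dotvC dotvZl dotvC. Qed.

Lemma dotvNl u w : dotv (- u) w = - dotv u w.
Proof. by rewrite -scaleN1r dotvZl mulN1r. Qed.

Lemma dotvNr u w : dotv w (- u) = - dotv w u.
Proof. by rewrite dotvC dotvNl dotvC. Qed.

Lemma dotvBl u w z : dotv (u - w) z = dotv u z - dotv w z.
Proof. by rewrite dotvDl dotvNl. Qed.

Lemma dotvBr u w z : dotv z (u - w) = dotv z u - dotv z w.
Proof. by rewrite !(dotvC z) dotvBl. Qed.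

Lemma dot0v u : dotv 0 u = 0.
Proof. by rewrite /dotv big1 // => i _; rewrite mxE mul0r. Qed.

Lemma dotvv_ge0 u : 0 <= dotv u u.
Proof. by rewrite sumr_ge0 // => i _; rewrite -expr2 sqr_ge0. Qed.

Lemma enorm_ge0 u : 0 <= enorm u.
Proof. exact: sqrtr_ge0. Qed.

Lemma enorm_sqr u : enorm u ^+ 2 = dotv u u.
Proof. by rewrite sqr_sqrtr // dotvv_ge0. Qed.

Lemma enormN u : enorm (- u) = enorm u.
Proof. by rewrite /enorm dotvNl (dotvC u) dotvNl opprK. Qed.

Lemma enormZ a u : enorm (a *: u) = `|a| * enorm u.
Proof. by rewrite /enorm dotvZl dotvZr mulrA -expr2 sqrtrM ?sqr_ge0 // sqrtr_sqr. Qed.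

Lemma enorm_eq0 u : (enorm u == 0) = (u == 0).
Proof.
apply/idP/eqP => [|->]; last by rewrite /enorm dot0v sqrtr0.
rewrite sqrtr_eq0 le_eqVlt ltNge dotvv_ge0 orbF => /eqP.
move/psumr_eq0P => u0; apply/rowP => i.
by apply/eqP; rewrite mxE -sqrf_eq0 expr2 u0 // => j _; rewrite -expr2 sqr_ge0.
Qed.

Lemma dotv_le_enorm u w : dotv u w <= enorm u * enorm w.
Proof.
have [->|u0] := eqVneq u 0; first by rewrite dot0v mulr_ge0 ?enorm_ge0.
have [->|w0] := eqVneq w 0; first by rewrite dotvC dot0v mulr_ge0 ?enorm_ge0.
have a_gt0 : 0 < enorm u by rewrite lt_def enorm_eq0 u0 enorm_ge0.
have b_gt0 : 0 < enorm w by rewrite lt_def enorm_eq0 w0 enorm_ge0.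
have := dotvv_ge0 (enorm w *: u - enorm u *: w).
rewrite !(dotvBl, dotvBr, dotvZl, dotvZr) (dotvC w u) -!enorm_sqr.
have ab_gt0 : 0 < enorm u * enorm w by rewrite mulr_gt0.
nra.
Qed.

Lemma enormD_le u w : enorm (u + w) <= enorm u + enorm w.
Proof.
rewrite -(ler_pXn2r (_ : 0 < 2)%N) ?nnegrE ?addr_ge0 ?enorm_ge0 //.
rewrite enorm_sqr dotvDl !dotvDr (dotvC w u) sqrrD -!enorm_sqr.
by have := dotv_le_enorm u w; lra.
Qed.

End Euclidean.

Lemma diff_le_of_slope_le (R : realType) (V : normedModType R) (f : V -> R)
    (x q : V) (c : R) :
  differentiable f x ->
  (forall t : R, 0 < t -> t^-1 * (f (t *: q + x) - f x) <= c) ->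
  'd f x q <= c.
Proof.
move=> df slope_le; rewrite -deriveE //.
have cvg_right := cvg_dnbhs_at_right (@diff_derivable _ _ _ f x q df).
apply: (cvgr_to_le cvg_right); near=> t; apply: slope_le.
by near: t; exact: nbhs_right_gt.
Unshelve. all: by end_near.
Qed.

Section Superdifferential.
Variables (R : realType) (d : nat).
Implicit Types (U f g : 'rV[R]_d -> R) (x y : 'rV[R]_d).

(* Along [q = gradf x - vx], the superdifferential inequality and the Lipschitz
   bound on [g] give [<gradf x, q> <= <vx, q> + L |q|], that is [|q|^2 <= L |q|]. *)
Lemma superdiff_gradient_dist_le U f g (gradf : 'rV[R]_d -> 'rV[R]_d) L x vx :
  0 <= L -> (forall y, U y = f y + g y) -> is_gradient f gradf ->
  (forall x y, `|g x - g y| <= L * enorm (x - y)) ->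
  superdiff U x vx -> enorm (vx - gradf x) <= L.
Proof.
move=> L_ge0 UE gradfE gL sdx; have [df dfE] := gradfE x.
set q := gradf x - vx.
have dotq : dotv (gradf x) q <= dotv vx q + L * enorm q.
  rewrite -dfE; apply: diff_le_of_slope_le => // t t_gt0.
  have := gL (t *: q + x) x; rewrite addrK enormZ (gtr0_norm t_gt0) ler_norml.
  move=> /andP[gl _]; have := sdx (t *: q + x); rewrite !UE addrK dotvZr.
  by rewrite ler_pdivrMl //; nra.
have : enorm q ^+ 2 <= L * enorm q by rewrite enorm_sqr {1}/q dotvBl; lra.
rewrite -enormN opprB -/q; have := enorm_ge0 q; nra.
Qed.

Lemma lipschitz_const_ge0 g L : (0 < d)%N ->
  (forall x y, `|g x - g y| <= L * enorm (x - y)) -> 0 <= L.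
Proof.
move=> d_gt0 gL; pose e : 'rV[R]_d := const_mx 1.
have e_gt0 : 0 < enorm e.
  rewrite lt_def enorm_ge0 enorm_eq0 andbT; apply/eqP => /rowP/(_ (Ordinal d_gt0)).
  by rewrite !mxE; exact/eqP/oner_neq0.
have := gL e 0; rewrite subr0 => /(le_trans (normr_ge0 _)).
by rewrite pmulr_lge0.
Qed.

Lemma strongly_concave_superdiff_ge m U x y vy :
  strongly_concave m U -> superdiff U y vy ->
  dotv vy (y - x) + m / 4 * enorm (y - x) ^+ 2 <= U y - U x.
Proof.
move=> scU sdy.
have := scU x y (1 / 2) ltac:(apply/andP; split; lra).
have := sdy ((1 / 2) *: x + (1 - 1 / 2) *: y).
have -> : (1 / 2) *: x + (1 - 1 / 2) *: y - y = (- (1 / 2)) *: (y - x).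
  by apply/rowP => i; rewrite !mxE; ring.
rewrite dotvZr -enormN opprB; nra.
Qed.

End Superdifferential.

Lemma proposal_exponent_diff (R : realType) (d : nat) (h : R)
    (x y V Vy : 'rV[R]_d) : h != 0 ->
  (enorm (y - x - h *: V) ^+ 2 - enorm (x - y - h *: Vy) ^+ 2) / (4 * h)
  = - dotv Vy (y - x) + dotv (y - x - h *: V) (Vy - V) / 2
    - h / 4 * enorm (Vy - V) ^+ 2.
Proof.
rewrite -(opprB y x); move: (y - x) => z h_neq0.
rewrite !enorm_sqr !(dotvBl, dotvBr, dotvNl, dotvNr, dotvZl, dotvZr).
by rewrite ?(dotvC z Vy) ?(dotvC z V) ?(dotvC Vy V); field.
Qed.

(* AM-GM on both cross terms leaves [m/4 - m/16 - m/400 >= 0] of the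
   strong-concavity gain [m/4 E^2]. *)
Lemma mala_exponent_lb (R : realType) (h m M L s E X W c : R) :
  0 < h -> 0 < m -> s ^+ 2 = 2 * h -> 0 <= s -> 0 <= X -> 0 <= W ->
  W <= M * E + 2 * L -> 200 * h * M ^+ 2 <= m -> 200 * h * L ^+ 2 <= 1 ->
  - (X * W) <= c ->
  - ((2 * h * M ^+ 2 / m + 5 * h * L ^+ 2) * X ^+ 2) - 11 / 100
    <= m / 4 * E ^+ 2 + s / 2 * c - h / 4 * W ^+ 2.
Proof.
move=> h_gt0 m_gt0 s2 s_ge0 X_ge0 W_ge0 W_le hM hL c_ge.
have amgmM : s / 2 * (X * (M * E)) <= m / 16 * E ^+ 2 + 2 * h * M ^+ 2 / m * X ^+ 2.
  have : 0 <= (m * E / 4 - s * M * X) ^+ 2 / m by rewrite divr_ge0 ?sqr_ge0 ?ltW.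
  have -> : (m * E / 4 - s * M * X) ^+ 2 / m = m / 16 * E ^+ 2
      + 2 * h * M ^+ 2 / m * X ^+ 2 - s / 2 * (X * (M * E)).
    by rewrite -s2; field; rewrite gt_eqF.
  lra.
have amgmL : s * (X * L) <= 5 * h * L ^+ 2 * X ^+ 2 + 1 / 10.
  have : 0 <= 5 / 2 * (s * X * L - 1 / 5) ^+ 2 by rewrite mulr_ge0 ?sqr_ge0.
  have -> : 5 / 2 * (s * X * L - 1 / 5) ^+ 2 =
      5 / 2 * s ^+ 2 * X ^+ 2 * L ^+ 2 - s * (X * L) + 1 / 10 by field.
  rewrite s2; lra.
have W2 : W ^+ 2 <= 2 * M ^+ 2 * E ^+ 2 + 8 * L ^+ 2.
  have := sqr_ge0 (M * E - 2 * L); nra.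
have hW2 : h / 4 * W ^+ 2 <= m / 400 * E ^+ 2 + 1 / 100.
  have h4_ge0 : 0 <= h / 4 by rewrite divr_ge0 ?ltW.
  have := ler_wpM2l h4_ge0 W2; have := ler_wpM2r (sqr_ge0 E) hM; lra.
have sc : - (s / 2 * (X * (M * E))) - s * (X * L) <= s / 2 * c.
  have s2_ge0 : 0 <= s / 2 by rewrite divr_ge0.
  have := ler_wpM2l X_ge0 W_le; rewrite mulrDr => XW.
  have := ler_wpM2l s2_ge0 c_ge; have := ler_wpM2l s2_ge0 XW; lra.
have := sqr_ge0 E; have := sqr_ge0 X; nra.
Qed.

(* [x^2 e^{-x^2/2} = e^{-x^2/8} (x^2 e^{-3x^2/8})] and [y e^{-3y/8} <= 8/3]
   for [y >= 0]. *)
Lemma sqr_normal_pdf_le (R : realType) (x : R) :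
  x ^+ 2 * normal_pdf 0 1 x <= 16 / 3 * normal_pdf 0 2 x.
Proof.
rewrite /normal_pdf oner_eq0 pnatr_eq0 /=.
have peak2 : normal_peak (2 : R) = normal_peak 1 / 2.
  rewrite /normal_peak (_ : (2 : R) ^+ 2 * pi *+ 2 = 2 ^+ 2 * (1 ^+ 2 * pi *+ 2)).
    by rewrite sqrtrM ?sqr_ge0 // sqrtr_sqr ger0_norm // invfM mulrC.
  by rewrite !mulr2n; ring.
have fun1 : normal_fun 0 1 x = normal_fun 0 2 x * expR (- (3 / 8 * x ^+ 2)).
  by rewrite /normal_fun -expRD; congr expR; rewrite !subr0 !mulr2n; field.
have tail_le : x ^+ 2 * expR (- (3 / 8 * x ^+ 2)) <= 8 / 3.
  rewrite expRN ler_pdivrMr ?expR_gt0 //.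
  have := expR_ge1Dx (3 / 8 * x ^+ 2); have := sqr_ge0 x; lra.
have := ler_wpM2l (mulr_ge0 (normal_peak_ge0 1) (normal_fun_ge0 0 2 x)) tail_le.
by rewrite fun1 peak2; congr (_ <= _); [ring | field].
Qed.

Section GaussianMoments.
Local Open Scope ereal_scope.

Lemma integral_normal_prob (R : realType) (m s : R) (f : R -> \bar R) :
  (forall x, 0 <= f x) -> measurable_fun setT f ->
  \int[normal_prob m s]_x f x
  = \int[lebesgue_measure]_x (f x * (normal_pdf m s x)%:E).
Proof.
move=> f_ge0 mf; have dom := normal_prob_dominates m s.
have mpdf : measurable_fun setT (fun x => (normal_pdf m s x)%:E).
  by apply/measurable_EFinP; exact: measurable_normal_pdf.
rewrite -(Radon_Nikodym_SigmaFinite.change_of_variables dom) //.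
apply: ae_eq_integral => //.
- apply: emeasurable_funM => //.
  exact: measurable_int (Radon_Nikodym_SigmaFinite.f_integrable dom).
- exact: emeasurable_funM.
- apply: ae_eqe_mul2l; apply: integral_ae_eq => //.
  + exact: Radon_Nikodym_SigmaFinite.f_integrable dom.
  + by move=> E _ mE; rewrite -Radon_Nikodym_SigmaFinite.f_integral.
Qed.

Lemma normal_prob_sqr_le (R : realType) :
  \int[normal_prob (0 : R) 1]_x (x ^+ 2)%:E <= (16 / 3)%:E.
Proof.
have mpdf (s : R) : measurable_fun setT (fun x => (normal_pdf 0 s x)%:E).
  by apply/measurable_EFinP; exact: measurable_normal_pdf.
rewrite integral_normal_prob //; last 2 first.
- by move=> x; rewrite lee_fin sqr_ge0.
- by apply/measurable_EFinP; exact/measurable_funX/measurable_id.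
apply: le_trans
  (_ : \int[lebesgue_measure]_x ((16 / 3)%:E * (normal_pdf 0 2 x)%:E) <= _).
  apply: ge0_le_integral => //.
  - by move=> x _; rewrite -EFinM lee_fin mulr_ge0 ?sqr_ge0 ?normal_pdf_ge0.
  - apply: emeasurable_funM; last exact: mpdf.
    by apply/measurable_EFinP; exact/measurable_funX/measurable_id.
  - by apply: emeasurable_funM; [exact: measurable_cst | exact: mpdf].
  - by move=> x _; rewrite -!EFinM lee_fin sqr_normal_pdf_le.
by rewrite integralZl ?integrable_normal_pdf // integral_normal_pdf mule1.
Qed.

Lemma std_normal_sqr_expectation_le (R : realType) (dO : measure_display)
    (O : measurableType dO) (P : probability O R) (X : O -> R) :
  measurable_fun setT X ->
  (forall A : set R, measurable A -> P (X @^-1` A) = normal_prob 0 1 A) ->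
  \int[P]_w ((X w) ^+ 2)%:E <= (16 / 3)%:E.
Proof.
move=> mX lawX.
(* [X] viewed with the measurable structure of [R] that carries [normal_prob]. *)
pose Y : O -> measurableTypeR R := X.
have msqr : measurable_fun [set: measurableTypeR R] (fun x => (x ^+ 2)%:E).
  by apply/measurable_EFinP; exact/measurable_funX/measurable_id.
have := @ge0_integral_pushforward _ _ _ _ _ _ (mX : measurable_fun setT Y) P setT _
  measurableT msqr.
rewrite preimage_setT => <-; last by move=> x _; rewrite lee_fin sqr_ge0.
apply: le_trans (normal_prob_sqr_le R); rewrite le_eqVlt; apply/orP; left.
by apply/eqP; apply: eq_measure_integral => A mA _; exact: lawX.
Qed.

(* The acceptance probability is not known to be measurable ([v] is an arbitrary
   selection), so monotonicity is read off the definition of the integral as a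
   supremum over simple functions. *)
Lemma ge0_le_integral_nonmeasurable (dT : measure_display) (T : measurableType dT)
    (R : realType) (mu : {measure set T -> \bar R}) (f g : T -> \bar R) :
  (forall x, 0 <= f x) -> (forall x, f x <= g x) ->
  \int[mu]_x f x <= \int[mu]_x g x.
Proof.
move=> f_ge0 fg; have g_ge0 x : 0 <= g x := le_trans (f_ge0 x) (fg x).
rewrite !ge0_integralTE //; apply: ereal_sup_le => _ [s sf <-].
by exists s => // x; exact: le_trans (sf x) (fg x).
Qed.

Lemma std_gaussian_sqr_norm_expectation_le (R : realType) (d : nat)
    (dO : measure_display) (O : measurableType dO) (P : probability O R)
    (xi : 'I_d -> O -> R) :
  std_gaussian_vector P xi ->
  \int[P]_w (\sum_(i < d) xi i w ^+ 2)%:E <= (d%:R * (16 / 3))%:E.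
Proof.
move=> [mxi [lawxi _]]; under eq_integral do rewrite -sumEFin.
rewrite ge0_integral_sum //; last 2 first.
- by move=> i; apply/measurable_EFinP; exact/measurable_funX/mxi.
- by move=> i w _; rewrite lee_fin sqr_ge0.
rewrite (_ : (d%:R * (16 / 3))%R = \sum_(i < d) (16 / 3 : R))%R; last first.
  by rewrite sumr_const card_ord mulr_natl.
rewrite -sumEFin.
by apply: lee_sum => i _; exact: std_normal_sqr_expectation_le (mxi i) (lawxi i).
Qed.

Lemma std_gaussian_expectation_ge (R : realType) (d : nat) (dO : measure_display)
    (O : measurableType dO) (P : probability O R) (xi : 'I_d -> O -> R)
    (F : O -> R) (c beta : R) :
  std_gaussian_vector P xi -> (0 <= c)%R -> (0 <= beta)%R ->
  (forall w, 0 <= F w)%R ->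
  (forall w, c - beta * \sum_(i < d) xi i w ^+ 2 <= F w)%R ->
  (c - beta * (d%:R * (16 / 3)))%:E <= \int[P]_w (F w)%:E.
Proof.
move=> gauss c_ge0 beta_ge0 F_ge0 F_ge; have [mxi _] := gauss.
pose S w := (\sum_(i < d) xi i w ^+ 2)%R.
pose G w := Num.max (c - beta * S w)%R 0%R.
have S_ge0 w : (0 <= S w)%R by rewrite sumr_ge0 // => i _; exact: sqr_ge0.
have mS : measurable_fun setT S.
  by apply: measurable_sum => i; exact/measurable_funX/mxi.
have mG : measurable_fun setT G.
  exact/measurable_maxr/measurable_cst/measurable_funB/measurable_funM.
have mbS : measurable_fun setT (fun w => (beta * S w)%:E).
  exact/measurable_EFinP/measurable_funM.
have c_le : c%:E <= \int[P]_w (G w)%:E + \int[P]_w (beta * S w)%:E.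
  rewrite -ge0_integralD //; last 3 first.
  - by move=> w _; rewrite lee_fin le_max lexx orbT.
  - exact/measurable_EFinP.
  - by move=> w _; rewrite lee_fin mulr_ge0.
  apply: le_trans (_ : \int[P]_w (cst c%:E w) <= _).
    by rewrite integral_cst //= probability_setT mule1.
  apply: ge0_le_integral => //.
  - exact/emeasurable_funD/mbS/measurable_EFinP.
  - move=> w _; rewrite /= -EFinD lee_fin.
    have : (c - beta * S w <= G w)%R by rewrite le_max lexx.
    lra.
have ES_le : \int[P]_w (beta * S w)%:E <= (beta * (d%:R * (16 / 3)))%:E.
  under eq_integral do rewrite EFinM.
  rewrite ge0_integralZl //; last 2 first.
  - exact/measurable_EFinP.
  - by move=> w _; rewrite lee_fin.
  by rewrite EFinM lee_wpmul2l ?lee_fin // std_gaussian_sqr_norm_expectation_le.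
apply: le_trans (_ : \int[P]_w (G w)%:E <= _).
  rewrite EFinB leeBlDr //; exact: le_trans c_le (leeD (lexx _) ES_le).
apply: ge0_le_integral_nonmeasurable => w; rewrite lee_fin ?le_max ?lexx ?orbT //.
by rewrite ge_max F_ge0 F_ge.
Qed.

End GaussianMoments.

Lemma le1_of_natmul_le1 (R : numDomainType) (n : nat) (a : R) :
  (0 < n)%N -> 0 <= a -> n%:R * a <= 1 -> a <= 1.
Proof. by move=> n_gt0 a_ge0; apply: le_trans; rewrite ler_peMl // ler1n. Qed.

Definition mala_log_ratio {R : realType} {d : nat} (pi_ : 'rV[R]_d -> R) (h : R)
    (v : 'rV[R]_d -> 'rV[R]_d) (x y : 'rV[R]_d) : R :=
  ln (pi_ y) - ln (pi_ x)
  + (enorm (y - x - h *: v x) ^+ 2 - enorm (x - y - h *: v y) ^+ 2) / (4 * h).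

Section MALA.
Variables (R : realType) (d : nat) (M L m h : R).
Variables (pi_ : 'rV[R]_d -> R) (v : 'rV[R]_d -> 'rV[R]_d).
Variables (f g : 'rV[R]_d -> R) (gradf : 'rV[R]_d -> 'rV[R]_d).
Hypothesis pi_pos : forall x, 0 < pi_ x.
Hypothesis h_gt0 : 0 < h.

Lemma mala_alphaE x y :
  mala_alpha pi_ h v x y = Order.min 1 (expR (mala_log_ratio pi_ h v x y)).
Proof.
rewrite /mala_alpha /mala_Q /mala_log_ratio; congr Order.min.
set c := (Num.sqrt (4 * pi * h)) ^- d.
have c_gt0 : 0 < c by rewrite invr_gt0 exprn_gt0 // sqrtr_gt0 !mulr_gt0 // pi_gt0.
rewrite -{1}[pi_ y]lnK ?posrE // -{1}[pi_ x]lnK ?posrE //.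
set ly := ln (pi_ y); set lx := ln (pi_ x).
set n1 := enorm (x - y - h *: v y) ^+ 2; set n2 := enorm (y - x - h *: v x) ^+ 2.
have -> : ly - lx + (n2 - n1) / (4 * h) =
    (ly + - n1 / (4 * h)) - (lx + - n2 / (4 * h)) by rewrite !mulNr; ring.
by rewrite expRB !expRD; field; rewrite !gt_eqF ?expR_gt0.
Qed.

Lemma mala_alpha_refl x : mala_alpha pi_ h v x x = 1.
Proof. by rewrite mala_alphaE /mala_log_ratio !subrr mul0r addr0 expR0 minxx. Qed.

Lemma mala_alpha_ge0 x y : 0 <= mala_alpha pi_ h v x y.
Proof. by rewrite mala_alphaE le_min ler01 expR_ge0. Qed.

Hypothesis m_gt0 : 0 < m.

Lemma mala_rate_ge0 : 0 <= 2 * h * M ^+ 2 / m + 5 * h * L ^+ 2.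
Proof.
have scaled_sqr_ge0 (c a : R) : 0 <= c -> 0 <= c * h * a ^+ 2.
  by move=> c_ge0; apply: mulr_ge0; [exact: mulr_ge0 (ltW h_gt0) | exact: sqr_ge0].
by rewrite addr_ge0 ?divr_ge0 ?scaled_sqr_ge0 ?ler0n ?(ltW m_gt0).
Qed.

Hypothesis lnE : forall x, ln (pi_ x) = f x + g x.
Hypothesis gradfE : is_gradient f gradf.
Hypothesis gradf_lip : forall x y, enorm (gradf x - gradf y) <= M * enorm (x - y).
Hypothesis g_lip : forall x y, `|g x - g y| <= L * enorm (x - y).
Hypothesis ln_pi_concave : strongly_concave m (fun x => ln (pi_ x)).
Hypothesis v_superdiff : forall x, superdiff (fun y => ln (pi_ y)) x (v x).

Section StepSize.
Hypothesis L_ge0 : 0 <= L.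
Hypothesis hM : 200 * h * M ^+ 2 <= m.
Hypothesis hL : 200 * h * L ^+ 2 <= 1.

Lemma mala_log_ratio_ge x xi0 :
  - ((2 * h * M ^+ 2 / m + 5 * h * L ^+ 2) * enorm xi0 ^+ 2) - 11 / 100
    <= mala_log_ratio pi_ h v x (x + h *: v x + Num.sqrt (2 * h) *: xi0).
Proof.
set s := Num.sqrt (2 * h); set y := x + h *: v x + s *: xi0.
have s2 : s ^+ 2 = 2 * h by rewrite sqr_sqrtr // mulr_ge0 // ltW.
have step : y - x - h *: v x = s *: xi0 by apply/rowP => i; rewrite !mxE; ring.
set w := v y - v x.
have w_le : enorm w <= M * enorm (y - x) + 2 * L.
  have -> : w = (gradf y - gradf x) + (v y - gradf y) - (v x - gradf x).
    by apply/rowP => i; rewrite !mxE; ring.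
  have vgrad_le z : enorm (v z - gradf z) <= L.
    exact: superdiff_gradient_dist_le lnE gradfE g_lip (v_superdiff z).
  have := vgrad_le y; have := vgrad_le x; have := gradf_lip y x.
  have := enormD_le (gradf y - gradf x + (v y - gradf y)) (- (v x - gradf x)).
  have := enormD_le (gradf y - gradf x) (v y - gradf y).
  rewrite enormN; lra.
have c_ge : - (enorm xi0 * enorm w) <= dotv xi0 w.
  by have := dotv_le_enorm (- xi0) w; rewrite dotvNl enormN; lra.
have sc := strongly_concave_superdiff_ge x ln_pi_concave (v_superdiff y).
have lb := mala_exponent_lb h_gt0 m_gt0 s2 (sqrtr_ge0 _) (enorm_ge0 xi0) (enorm_ge0 w)
  w_le hM hL c_ge.
rewrite /mala_log_ratio proposal_exponent_diff ?gt_eqF // step dotvZl.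
lra.
Qed.

Lemma mala_alpha_ge x xi0 :
  89 / 100 - (2 * h * M ^+ 2 / m + 5 * h * L ^+ 2) * enorm xi0 ^+ 2
    <= mala_alpha pi_ h v x (x + h *: v x + Num.sqrt (2 * h) *: xi0).
Proof.
rewrite mala_alphaE le_min; apply/andP; split.
  have := mulr_ge0 mala_rate_ge0 (sqr_ge0 (enorm xi0)); lra.
apply: le_trans (expR_ge1Dx _); have := mala_log_ratio_ge x xi0; lra.
Qed.

End StepSize.

Hypothesis hdM : 200 * h * (d%:R * (M / m) * M) <= 1.
Hypothesis hdL : 200 * h * (d%:R * L ^+ 2) <= 1.

Lemma mala_rate_dim_le : (2 * h * M ^+ 2 / m + 5 * h * L ^+ 2) * d%:R <= 7 / 200.
Proof.
have -> : (2 * h * M ^+ 2 / m + 5 * h * L ^+ 2) * d%:R =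
    200 * h * (d%:R * (M / m) * M) / 100 + 200 * h * (d%:R * L ^+ 2) / 40.
  by field; rewrite gt_eqF.
by have := hdM; have := hdL; lra.
Qed.

Lemma mala_alpha_ge_sum x (z : 'I_d -> R) :
  89 / 100 - (2 * h * M ^+ 2 / m + 5 * h * L ^+ 2) * \sum_(i < d) z i ^+ 2
    <= mala_alpha pi_ h v x (x + h *: v x + Num.sqrt (2 * h) *: \row_i z i).
Proof.
have [d0|d_gt0] := posnP d.
  have no_index (i : 'I_d) : False by case: i => i; rewrite d0.
  have rV0_eq (u : 'rV[R]_d) : u = x by apply/rowP => i; case: (no_index i).
  rewrite [X in mala_alpha _ _ _ _ X]rV0_eq mala_alpha_refl.
  rewrite big1 => [|i]; last by case: (no_index i).
  by rewrite mulr0 subr0 ler_pdivrMr ?mul1r ?ler_nat ?ltr0n.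
have h200_ge0 : 0 <= 200 * h := mulr_ge0 (ler0n _ _) (ltW h_gt0).
have hM : 200 * h * M ^+ 2 <= m.
  suff : 200 * h * M ^+ 2 / m <= 1 by rewrite ler_pdivrMr // mul1r.
  apply: (le1_of_natmul_le1 d_gt0).
    exact: divr_ge0 (mulr_ge0 h200_ge0 (sqr_ge0 M)) (ltW m_gt0).
  by rewrite (_ : d%:R * _ = 200 * h * (d%:R * (M / m) * M)) //; ring.
have hL : 200 * h * L ^+ 2 <= 1.
  apply: (le1_of_natmul_le1 d_gt0); first exact: mulr_ge0 h200_ge0 (sqr_ge0 L).
  by rewrite (_ : d%:R * _ = 200 * h * (d%:R * L ^+ 2)) //; ring.
have -> : \sum_(i < d) z i ^+ 2 = enorm (\row_i z i) ^+ 2.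
  by rewrite enorm_sqr; apply: eq_bigr => i _; rewrite mxE expr2.
have L_ge0 : 0 <= L := lipschitz_const_ge0 d_gt0 g_lip.
exact: mala_alpha_ge L_ge0 hM hL x (\row_i z i).
Qed.

End MALA.

Unset Implicit Arguments.
Theorem mainTheorem6 (R : realType) (d : nat) (M L m h : R)
  (pi_ : 'rV[R]_d -> R) (v : 'rV[R]_d -> 'rV[R]_d)
  (dO : measure_display) (O : measurableType dO) (P : probability O R)
  (xi : 'I_d -> O -> R) :
  MALA_assumption M L m pi_ ->
  (forall x, superdiff (fun y => ln (pi_ y)) x (v x)) ->
  0 < h ->
  200 * h * (d%:R * (M / m) * M) <= 1 ->
  200 * h * (d%:R * L ^+ 2) <= 1 ->
  std_gaussian_vector P xi ->
  ((13 / 20)%:E <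
    ereal_inf (range (fun x : 'rV[R]_d =>
      \int[P]_w (mala_alpha pi_ h v x
                   (x + h *: v x + Num.sqrt (2 * h) *: \row_i xi i w))%:E)))%E.
Proof.
move=> [pi_pos [f [g [gradf [lnE [_ [gradfE [gradf_lip [g_lip [m_gt0 ln_pi_sc]]]]]]]]]].
move=> v_superdiff h_gt0 hdM hdL gauss.
have rate_ge0 := mala_rate_ge0 M L h_gt0 m_gt0.
have rate_dim := mala_rate_dim_le m_gt0 hdM hdL.
apply: (@lt_le_trans _ _ (7 / 10)%:E); first by rewrite lte_fin; lra.
apply: le_ereal_inf_tmp => _ [x _ <-].
apply: le_trans (std_gaussian_expectation_ge gauss _ rate_ge0 _
  (fun w => mala_alpha_ge_sum pi_pos h_gt0 m_gt0 lnE gradfE gradf_lip g_lip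
     ln_pi_sc v_superdiff hdM hdL x (xi^~ w))).
- by rewrite lee_fin; lra.
- lra.
- by move=> w; exact: mala_alpha_ge0.
Qed.
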